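(* Let $H$ be a complex Hilbert space and $\mathcal S(H)$ the set of bounded self-adjoint operators on $H$ with the logical order $\preceq$. For every pair $A,B \in \mathcal S(H)$, the set $\{P_C : C \in \mathcal S(H),\ C \preceq A \text{ and } C \preceq B\}$ has a maximum element (with respect to the usual order of projections), the meet $A \curlywedge B$ of $A$ and $B$ in $(\mathcal S(H),\preceq)$ exists, and \[ A \curlywedge B = B\big(\max\{P_C : C \preceq A \text{ and } C \preceq B\}\big). \]
   Context: For $C \in \mathcal S(H)$, $P_C$ denotes the orthogonal projection onto the closure of the range of $C$; projections are ordered by $P_1 \le P_2$ iff $P_1P_2 = P_1$. The logical order: $A \preceq B$ iff $B = A + D$ for some $D \in \mathcal S(H)$ with $AD = O$; equivalently $A = BP_A$. Juxtaposition denotes operator composition. *)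

From HB Require Import structures.
From mathcomp Require Import all_boot all_order all_algebra.
From mathcomp Require Import reals.
From mathcomp Require Import complex.
Set Implicit Arguments. Unset Strict Implicit. Unset Printing Implicit Defensive.
Import Order.TTheory GRing.Theory Num.Theory.
Local Open Scope ring_scope.
Local Open Scope complex_scope.

Section Hilbert.
Variables (R : realType) (V : lmodType R[i]) (ip : V -> V -> R[i]).

Definition hnorm (x : V) : R := Num.sqrt (complex.Re (ip x x)).

Definition is_hilbert : Prop :=
  [/\ (forall (a : R[i]) (x y z : V), ip (a *: x + y) z = a * ip x z + ip y z),
      (forall x y : V, ip x y = (ip y x)^*),
      (forall x : V, 0 <= ip x x),
      (forall x : V, ip x x = 0 -> x = 0) &
      (forall u : nat -> V,
         (forall e : R, 0 < e -> exists N : nat, forall m n : nat,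
             (N <= m)%N -> (N <= n)%N -> hnorm (u m - u n) < e) ->
         exists l : V, forall e : R, 0 < e -> exists N : nat, forall n : nat,
             (N <= n)%N -> hnorm (u n - l) < e)].

Definition bounded_op (A : V -> V) : Prop :=
  (forall (a : R[i]) (x y : V), A (a *: x + y) = a *: A x + A y) /\
  (exists M : R, forall x : V, hnorm (A x) <= M * hnorm x).

Definition selfadj (A : V -> V) : Prop :=
  bounded_op A /\ (forall x y : V, ip (A x) y = ip x (A y)).

Definition logle (A B : V -> V) : Prop :=
  exists D : V -> V, [/\ selfadj D, (forall x, B x = A x + D x)
                                  & (forall x, A (D x) = 0)].

Definition in_closure_range (C : V -> V) (y : V) : Prop :=
  forall e : R, 0 < e -> exists x : V, hnorm (y - C x) < e.

Definition is_range_proj (C P : V -> V) : Prop :=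
  [/\ selfadj P, (forall x, P (P x) = P x)
    & (forall y, (exists x, y = P x) <-> in_closure_range C y)].

Definition proj_le (P1 P2 : V -> V) : Prop := forall x, P1 (P2 x) = P1 x.

Definition is_logmeet (A B X : V -> V) : Prop :=
  [/\ selfadj X, logle X A, logle X B &
      (forall Y, selfadj Y -> logle Y A -> logle Y B -> logle Y X)].

End Hilbert.

(* Let K be the set of x with A (A^n x) = B (A^n x) for all n: the largest
   A-invariant closed subspace on which A and B agree.  K is invariant under A
   and B, so the orthogonal projection P onto K commutes with both, and
   X := A P = B P lies below A and B in the logical order.  A lower bound Y of A
   and B satisfies A Y = Y Y = B Y, hence A^n Y = Y^(n+1) and Y has range in K;
   then Y P = Y and Y is below X, so X is the meet.  Finally, C below T forces
   T P_C = C, so ran C is inside ran T and P_C <= P_T; for the lower bounds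
   C <= X this makes P_X the maximum of the P_C, and for X <= B it gives
   B P_X = X.  Orthogonal projections onto closed subspaces are obtained from
   nearest points, which exist by the parallelogram law and completeness. *)

From HB Require Import structures.
From mathcomp Require Import all_boot all_order all_algebra.
From mathcomp Require Import boolp classical_sets.
From mathcomp Require Import lra ring.
From mathcomp Require Import reals complex.
Import Order.TTheory GRing.Theory Num.Theory.
Local Open Scope ring_scope.
Local Open Scope complex_scope.

Section Hilbert.
Context {R : realType} {V : lmodType R[i]} {ip : V -> V -> R[i]}.
Hypothesis hH : is_hilbert ip.

Lemma ipL (a : R[i]) x y z : ip (a *: x + y) z = a * ip x z + ip y z.
Proof. by case: hH => h _ _ _ _; exact: h. Qed.
Lemma ipC x y : ip x y = (ip y x)^*.
Proof. by case: hH => _ h _ _ _; exact: h. Qed.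
Lemma ipxx_ge0 x : 0 <= ip x x.
Proof. by case: hH => _ _ h _ _; exact: h. Qed.
Lemma ipxx_eq0 x : ip x x = 0 -> x = 0.
Proof. by case: hH => _ _ _ h _; exact: h. Qed.

Lemma ip0l z : ip 0 z = 0.
Proof.
have := ipL 1 0 0 z; rewrite scaler0 addr0 mul1r => h.
by apply: (@addrI _ (ip 0 z)); rewrite addr0 -h.
Qed.
Lemma ipDl x y z : ip (x + y) z = ip x z + ip y z.
Proof. by have := ipL 1 x y z; rewrite scale1r mul1r. Qed.
Lemma ipZl a x z : ip (a *: x) z = a * ip x z.
Proof. by rewrite -[a *: x]addr0 ipL ip0l addr0. Qed.
Lemma ipNl x z : ip (- x) z = - ip x z.
Proof. by rewrite -scaleN1r ipZl mulN1r. Qed.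
Lemma ipBl x y z : ip (x - y) z = ip x z - ip y z.
Proof. by rewrite ipDl ipNl. Qed.
Lemma ip0r z : ip z 0 = 0.
Proof. by rewrite ipC ip0l conjc0. Qed.
Lemma ipDr x y z : ip z (x + y) = ip z x + ip z y.
Proof. by rewrite (ipC z x) (ipC z y) (ipC z (x + y)) ipDl rmorphD. Qed.
Lemma ipZr a x z : ip z (a *: x) = a^* * ip z x.
Proof. by rewrite (ipC z x) (ipC z (a *: x)) ipZl rmorphM. Qed.
Lemma ipNr x z : ip z (- x) = - ip z x.
Proof. by rewrite (ipC z x) (ipC z (- x)) ipNl rmorphN. Qed.
Lemma ipBr x y z : ip z (x - y) = ip z x - ip z y.
Proof. by rewrite ipDr ipNr. Qed.

Lemma ipl_eq0 u : (forall w, ip u w = 0) -> u = 0.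
Proof. by move=> h; apply: ipxx_eq0. Qed.
Lemma ip_injl u v : (forall w, ip u w = ip v w) -> u = v.
Proof. by move=> h; apply/subr0_eq/ipl_eq0 => w; rewrite ipBl h subrr. Qed.

Definition sqnorm (v : V) : R := complex.Re (ip v v).

Lemma ipxxE v : ip v v = (sqnorm v)%:C.
Proof.
rewrite /sqnorm; have := ipxx_ge0 v; case: (ip v v) => a b.
by rewrite lecE /= => /andP [/eqP -> _].
Qed.
Lemma sqnorm_ge0 v : 0 <= sqnorm v.
Proof. by have := ipxx_ge0 v; rewrite ipxxE ler0c. Qed.
Lemma sqnorm_eq0 v : sqnorm v = 0 -> v = 0.
Proof. by move=> h; apply: ipxx_eq0; rewrite ipxxE h. Qed.
Lemma sqnorm0 : sqnorm 0 = 0.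
Proof. by rewrite /sqnorm ip0l. Qed.

Lemma sqnormD x y :
  sqnorm (x + y) = sqnorm x + sqnorm y + 2 * complex.Re (ip x y).
Proof.
rewrite /sqnorm ipDl !ipDr (ipC y x).
case: (ip x x) (ip x y) (ip y y) => [a b] [c d] [e f] /=; lra.
Qed.
Lemma sqnormN x : sqnorm (- x) = sqnorm x.
Proof. by rewrite /sqnorm ipNl ipNr opprK. Qed.
Lemma sqnormZ (c : R[i]) v :
  sqnorm (c *: v) = (complex.Re c ^+ 2 + complex.Im c ^+ 2) * sqnorm v.
Proof. by rewrite /sqnorm ipZl ipZr ipxxE; case: c => a b /=; ring. Qed.

Lemma Re_ipN x y : complex.Re (ip x (- y)) = - complex.Re (ip x y).
Proof. by rewrite ipNr; case: (ip x y). Qed.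
Lemma Re_ipZl (s : R) x y : complex.Re (ip (s%:C *: x) y) = s * complex.Re (ip x y).
Proof. by rewrite ipZl; case: (ip x y) => a b /=; ring. Qed.
Lemma Re_ipZr (s : R) x y : complex.Re (ip x (s%:C *: y)) = s * complex.Re (ip x y).
Proof. by rewrite ipZr; case: (ip x y) => a b /=; ring. Qed.

Lemma parallelogram a b :
  sqnorm (a + b) + sqnorm (a - b) = 2 * sqnorm a + 2 * sqnorm b.
Proof. rewrite !sqnormD sqnormN Re_ipN; lra. Qed.

Lemma Cauchy_Schwarz x y : complex.Re (ip x y) ^+ 2 <= sqnorm x * sqnorm y.
Proof.
have [/sqnorm_eq0 ->|ny] := eqVneq (sqnorm y) 0.
  by rewrite ip0r sqnorm0 expr0n /= mulr0.
have ny_gt0 : 0 < sqnorm y by rewrite lt0r ny sqnorm_ge0.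
set r := complex.Re (ip x y).
have := sqnorm_ge0 ((sqnorm y)%:C *: x - r%:C *: y).
rewrite sqnormD sqnormN !sqnormZ Re_ipN Re_ipZl Re_ipZr -/r /= expr0n /= !addr0.
move=> h; rewrite -subr_ge0 -(pmulr_rge0 _ ny_gt0); nra.
Qed.

Lemma hnormE v : hnorm ip v = Num.sqrt (sqnorm v).
Proof. by []. Qed.
Lemma hnorm_ge0 v : 0 <= hnorm ip v.
Proof. exact: sqrtr_ge0. Qed.
Lemma sqr_hnorm v : hnorm ip v ^+ 2 = sqnorm v.
Proof. by rewrite sqr_sqrtr // sqnorm_ge0. Qed.
Lemma hnorm0 : hnorm ip 0 = 0.
Proof. by rewrite hnormE sqnorm0 sqrtr0. Qed.
Lemma hnormN v : hnorm ip (- v) = hnorm ip v.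
Proof. by rewrite !hnormE sqnormN. Qed.
Lemma hnorm_eq0 v : hnorm ip v = 0 -> v = 0.
Proof.
move/eqP; rewrite sqrtr_eq0 => h.
by apply: sqnorm_eq0; apply/le_anti; rewrite h sqnorm_ge0.
Qed.
Lemma hnormZ (a : R[i]) v :
  hnorm ip (a *: v) = Num.sqrt (complex.Re a ^+ 2 + complex.Im a ^+ 2) * hnorm ip v.
Proof. by rewrite !hnormE sqnormZ sqrtrM // addr_ge0 // sqr_ge0. Qed.
Lemma hnorm_lt v e : 0 < e -> (hnorm ip v < e) = (sqnorm v < e ^+ 2).
Proof. by move=> e0; rewrite hnormE -{1}(gtr0_norm e0) -sqrtr_sqr ltr_sqrt // exprn_gt0. Qed.

Lemma Re_ip_le x y : complex.Re (ip x y) <= hnorm ip x * hnorm ip y.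
Proof.
rewrite !hnormE -sqrtrM ?sqnorm_ge0 //.
apply: le_trans (ler_norm _) _; rewrite -sqrtr_sqr ler_sqrt ?Cauchy_Schwarz //.
by rewrite mulr_ge0 ?sqnorm_ge0.
Qed.

Lemma sqnormD_le x y :
  sqnorm (x + y) <= sqnorm x + hnorm ip y * (2 * hnorm ip x + hnorm ip y).
Proof. by have := Re_ip_le x y; rewrite sqnormD -!sqr_hnorm; nra. Qed.

Lemma hnormD x y : hnorm ip (x + y) <= hnorm ip x + hnorm ip y.
Proof.
have s0 : 0 <= hnorm ip x + hnorm ip y by rewrite addr_ge0 // hnorm_ge0.
rewrite -(ger0_norm s0) -sqrtr_sqr hnormE ler_sqrt ?sqr_ge0 //.
by have := sqnormD_le x y; rewrite -!sqr_hnorm; nra.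
Qed.

Lemma cauchy_seq_cvg {u : nat -> V} :
  (forall e : R, 0 < e -> exists N : nat, forall m n : nat,
      (N <= m)%N -> (N <= n)%N -> hnorm ip (u m - u n) < e) ->
  exists l : V, forall e : R, 0 < e -> exists N : nat, forall n : nat,
      (N <= n)%N -> hnorm ip (u n - l) < e.
Proof. by case: hH => _ _ _ _ h; exact: h. Qed.

Section Operators.
Implicit Types f g : V -> V.

Definition linear_op f := forall a x y, f (a *: x + y) = a *: f x + f y.

Lemma lin0 {f} : linear_op f -> f 0 = 0.
Proof.
move=> hf; have := hf 1 0 0; rewrite scaler0 addr0 scale1r => h.
by apply: (@addrI _ (f 0)); rewrite addr0 -h.
Qed.
Lemma linD {f} : linear_op f -> forall x y, f (x + y) = f x + f y.
Proof. by move=> hf x y; have := hf 1 x y; rewrite !scale1r. Qed.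
Lemma linZ {f} : linear_op f -> forall a x, f (a *: x) = a *: f x.
Proof. by move=> hf a x; have := hf a x 0; rewrite !addr0 lin0 // addr0. Qed.
Lemma linB {f} : linear_op f -> forall x y, f (x - y) = f x - f y.
Proof. by move=> hf x y; rewrite -scaleN1r linD // linZ // scaleN1r. Qed.

Lemma bounded_linear {f} : bounded_op ip f -> linear_op f.
Proof. by case. Qed.
Lemma selfadj_linear {f} : selfadj ip f -> linear_op f.
Proof. by case=> [[]]. Qed.
Lemma selfadj_bounded {f} : selfadj ip f -> bounded_op ip f.
Proof. by case. Qed.
Lemma selfadjE {f} : selfadj ip f -> forall x y, ip (f x) y = ip x (f y).
Proof. by case. Qed.

Lemma bounded_ge0 {f} : bounded_op ip f ->
  exists M, 0 <= M /\ forall x, hnorm ip (f x) <= M * hnorm ip x.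
Proof.
case=> _ [M hM]; exists `|M|; split => // x.
by apply: le_trans (hM x) _; rewrite ler_wpM2r ?hnorm_ge0 ?ler_norm.
Qed.

Lemma bounded_comp {f g} : bounded_op ip f -> bounded_op ip g ->
  bounded_op ip (fun x => f (g x)).
Proof.
move=> hf hg; split.
  by move=> a x y; rewrite (bounded_linear hg) (bounded_linear hf).
have [Mf [Mf0 hMf]] := bounded_ge0 hf; have [Mg [Mg0 hMg]] := bounded_ge0 hg.
exists (Mf * Mg) => x; apply: le_trans (hMf _) _.
by rewrite -mulrA ler_wpM2l.
Qed.

Lemma bounded_iter {f} n : bounded_op ip f -> bounded_op ip (iter n f).
Proof.
move=> hf; elim: n => [|n IH]; last exact: bounded_comp hf IH.
by split=> //; exists 1 => x; rewrite mul1r.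
Qed.

Lemma bounded_sub {f g} : bounded_op ip f -> bounded_op ip g ->
  bounded_op ip (fun x => f x - g x).
Proof.
move=> hf hg; split.
  move=> a x y; rewrite (bounded_linear hg) (bounded_linear hf) scalerBr.
  by rewrite opprD addrACA.
have [Mf [Mf0 hMf]] := bounded_ge0 hf; have [Mg [Mg0 hMg]] := bounded_ge0 hg.
exists (Mf + Mg) => x; apply: le_trans (hnormD _ _) _.
by rewrite hnormN mulrDl lerD.
Qed.

Lemma selfadj_sub {f g} : selfadj ip f -> selfadj ip g ->
  selfadj ip (fun x => f x - g x).
Proof.
move=> hf hg; split; first exact: bounded_sub (selfadj_bounded hf) (selfadj_bounded hg).
by move=> x y; rewrite ipBl ipBr !selfadjE.
Qed.

Lemma selfadj_comp {f g} : selfadj ip f -> selfadj ip g ->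
  (forall x, f (g x) = g (f x)) -> selfadj ip (fun x => f (g x)).
Proof.
move=> hf hg fg; split; first exact: bounded_comp (selfadj_bounded hf) (selfadj_bounded hg).
by move=> x y; rewrite (selfadjE hf) (selfadjE hg) fg.
Qed.

Lemma selfadj_comp_eq0C {f g} : selfadj ip f -> selfadj ip g ->
  (forall x, f (g x) = 0) -> forall x, g (f x) = 0.
Proof.
by move=> hf hg fg x; apply: ipl_eq0 => w; rewrite (selfadjE hg) (selfadjE hf) fg ip0r.
Qed.

End Operators.

Definition closed_subspace (S : V -> Prop) :=
  [/\ S 0, (forall a x y, S x -> S y -> S (a *: x + y)) &
      (forall y, (forall e : R, 0 < e -> exists s, S s /\ hnorm ip (y - s) < e) -> S y)].

Section ClosedSubspace.
Context {S : V -> Prop} (hS : closed_subspace S).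

Lemma closed_subspace0 : S 0.
Proof. by case: hS. Qed.
Lemma closed_subspaceL a {x y} : S x -> S y -> S (a *: x + y).
Proof. by case: hS => _ h _; exact: h. Qed.
Lemma closed_subspace_lim y :
  (forall e : R, 0 < e -> exists s, S s /\ hnorm ip (y - s) < e) -> S y.
Proof. by case: hS => _ _ h; exact: h. Qed.
Lemma closed_subspaceD {x y} : S x -> S y -> S (x + y).
Proof. by move=> Sx Sy; have := closed_subspaceL 1 Sx Sy; rewrite scale1r. Qed.
Lemma closed_subspaceZ a {x} : S x -> S (a *: x).
Proof. by move=> Sx; have := closed_subspaceL a Sx closed_subspace0; rewrite addr0. Qed.
Lemma closed_subspaceB {x y} : S x -> S y -> S (x - y).
Proof. by move=> Sx Sy; rewrite -scaleN1r addrC; apply: closed_subspaceL. Qed.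

Lemma closure_range_sub C y :
  (forall z, S (C z)) -> in_closure_range ip C y -> S y.
Proof.
move=> SC Cy; apply: closed_subspace_lim => e e0.
by have [z hz] := Cy e e0; exists (C z).
Qed.

End ClosedSubspace.

Lemma closed_subspace_bigcap (I : Type) (F : I -> V -> Prop) :
  (forall i, closed_subspace (F i)) -> closed_subspace (fun x => forall i, F i x).
Proof.
move=> hF; split.
- by move=> i; apply: closed_subspace0 (hF i).
- by move=> a x y Fx Fy i; exact (closed_subspaceL (hF i) a (Fx i) (Fy i)).
- move=> y hy i; apply: (closed_subspace_lim (hF i)) => e e0.
  by have [s [Fs ys]] := hy e e0; exists s.
Qed.

Lemma closed_subspace_kernel {f} : bounded_op ip f -> closed_subspace (fun x => f x = 0).
Proof.
move=> hf; have lf := bounded_linear hf; split.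
- exact: lin0.
- by move=> a x y fx fy; rewrite lf fx fy scaler0 addr0.
move=> y hy; have [M [M0 hM]] := bounded_ge0 hf; apply: hnorm_eq0.
apply/le_anti; rewrite hnorm_ge0 andbT; apply/ler_addgt0Pr => e e0.
have M1 : 0 < M + 1 by lra.
have [k [fk yk]] := hy _ (divr_gt0 e0 M1).
have := hM (y - k); rewrite (linB lf) fk subr0.
rewrite ltr_pdivlMr // in yk.
have := hnorm_ge0 (y - k); nra.
Qed.

Lemma closed_subspace_closure_range {C} : linear_op C -> closed_subspace (in_closure_range ip C).
Proof.
move=> lC; split.
- by move=> e e0; exists 0; rewrite lin0 // subrr hnorm0.
- move=> a y1 y2 h1 h2 e e0.
  set na := Num.sqrt (complex.Re a ^+ 2 + complex.Im a ^+ 2).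
  have na0 : 0 <= na by exact: sqrtr_ge0.
  have na1 : 0 < 2 * (na + 1) by lra.
  have [x1 hx1] := h1 _ (divr_gt0 e0 na1).
  have [x2 hx2] := h2 _ (divr_gt0 e0 (ltr0Sn _ 1)).
  exists (a *: x1 + x2); rewrite lC opprD addrACA -scalerBr.
  apply: le_lt_trans (hnormD _ _) _; rewrite hnormZ -/na.
  rewrite ltr_pdivlMr // in hx1.
  have := hnorm_ge0 (y1 - C x1); have := hnorm_ge0 (y2 - C x2).
  move: hx1 hx2; rewrite [e in _ < e]splitr; nra.
- move=> y hy e e0.
  have e2 : 0 < e / 2 by rewrite divr_gt0.
  have [s [Cs ys]] := hy _ e2; have [x sx] := Cs _ e2.
  exists x; rewrite -(subrKA s).
  by apply: le_lt_trans (hnormD _ _) _; rewrite [e]splitr ltrD.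
Qed.

Lemma inv_succ_small {e : R} :
  0 < e -> exists N : nat, forall n, (N <= n)%N -> (n.+1%:R : R)^-1 < e.
Proof.
move=> e0; have hN : e^-1 < (Num.Def.archi_bound e^-1)%:R by rewrite archi_boundP // invr_ge0 ltW.
exists (Num.Def.archi_bound e^-1) => n hn.
rewrite -[e]invrK ltf_pV2 ?posrE ?invr_gt0 ?ltr0Sn //.
by apply: lt_le_trans hN _; rewrite ler_nat ltnW.
Qed.

Lemma sqnorm_le_of_approx y d : 0 <= d ->
  (forall e : R, 0 < e -> exists z, sqnorm z < d + e /\ hnorm ip (y - z) < e) ->
  sqnorm y <= d.
Proof.
move=> d0 hy; apply/ler_addgt0Pr => eta eta0.
set K := Num.sqrt (d + 1).
have K0 : 0 <= K by exact: sqrtr_ge0.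
set e := Num.min 1 (eta / (2 * K + 2)).
have e0 : 0 < e by rewrite lt_min ltr01 divr_gt0 //; lra.
have e1 : e <= 1 by rewrite ge_min lexx.
have eK : e * (2 * K + 2) <= eta by rewrite -ler_pdivlMr ?ge_min ?lexx ?orbT //; lra.
have [z [zd yz]] := hy e e0.
have zK : hnorm ip z <= K by rewrite hnormE ler_sqrt; lra.
have := sqnormD_le z (y - z); rewrite addrC subrK.
have := hnorm_ge0 z; have := hnorm_ge0 (y - z); nra.
Qed.

(* Test with c = ip r s / (sqnorm s + 1); the + 1 avoids a case split on s = 0. *)
Lemma ip_eq0_of_sqnorm_min (r s : V) :
  (forall c : R[i], sqnorm r <= sqnorm (r - c *: s)) -> ip r s = 0.
Proof.
move=> rmin; set sg := (sqnorm s + 1)^-1.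
have s0 := sqnorm_ge0 s.
have sg0 : 0 < sg by rewrite invr_gt0; lra.
have sgs : sg * sqnorm s = 1 - sg.
  have : sg * (sqnorm s + 1) = 1 by rewrite mulVf //; lra.
  by rewrite mulrDr mulr1 => h; lra.
have := rmin (sg%:C * ip r s).
rewrite sqnormD sqnormN sqnormZ Re_ipN ipZr.
case: (ip r s) => a b /=; rewrite !mul0r !subr0 !addr0 => ineq.
have eX : ((sg * a) ^+ 2 + (sg * b) ^+ 2) * sqnorm s
    = (sg * sqnorm s) * (sg * (a ^+ 2 + b ^+ 2)) by ring.
have eY : sg * a * a - - (sg * b) * b = sg * (a ^+ 2 + b ^+ 2) by ring.
rewrite eX eY sgs in ineq.
have m0 : 0 <= sg * (a ^+ 2 + b ^+ 2) by rewrite mulr_ge0 ?addr_ge0 ?sqr_ge0 ?ltW.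
have : sg * (a ^+ 2 + b ^+ 2) <= 0.
  by move: (sg * _) m0 ineq => m m0 ineq; nra.
rewrite pmulr_rle0 // => n0.
have a2 : a ^+ 2 = 0 by apply/le_anti; rewrite sqr_ge0 andbT; have := sqr_ge0 b; lra.
have b2 : b ^+ 2 = 0 by apply/le_anti; rewrite sqr_ge0 andbT; have := sqr_ge0 a; lra.
by move/eqP: a2; rewrite sqrf_eq0 => /eqP ->; move/eqP: b2; rewrite sqrf_eq0 => /eqP ->.
Qed.

Section Projection.
Context {S : V -> Prop} (hS : closed_subspace S).

Lemma sqnorm_sub_le_dist {x d s t} : (forall s, S s -> d <= sqnorm (x - s)) ->
  S s -> S t -> sqnorm (s - t) <= 2 * (sqnorm (x - s) - d) + 2 * (sqnorm (x - t) - d).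
Proof.
move=> dS Ss St; pose mid := (2^-1 : R)%:C *: (s + t).
have Smid : S mid by apply/(closed_subspaceZ hS)/(closed_subspaceD hS).
have par := parallelogram (x - s) (x - t).
have sum_mid : (x - s) + (x - t) = (2 : R)%:C *: (x - mid).
  rewrite scalerBr scalerA -rmorphM divff ?pnatr_eq0 // scale1r.
  by rewrite rmorph_nat scaler_nat mulr2n opprD addrACA.
have diff : (x - s) - (x - t) = - (s - t) by rewrite opprB addrC addrA subrK opprB.
rewrite sum_mid diff sqnormZ sqnormN /= in par; have := dS _ Smid; lra.
Qed.

Lemma exists_nearest x :
  exists2 l, S l & forall s, S s -> sqnorm (x - l) <= sqnorm (x - s).
Proof.
pose E : set R := fun r => exists2 s, S s & r = sqnorm (x - s).
have E0 : E (sqnorm (x - 0)) by exists 0 => //; exact: closed_subspace0 hS.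
have E_lb : lbound E 0 by move=> r [s _ ->]; exact: sqnorm_ge0.
have E_inf : has_inf E by split; [exists (sqnorm (x - 0)) | exists 0].
set d := inf E.
have dS s : S s -> d <= sqnorm (x - s) by move=> Ss; apply: (ge_inf E_inf.2); exists s.
have d0 : 0 <= d by apply: lb_le_inf E_lb; exists (sqnorm (x - 0)).
have /choice [u hu] : forall n : nat,
    exists v, S v /\ sqnorm (x - v) < d + (n.+1%:R)^-1.
  move=> n.
  have n_gt0 : 0 < (n.+1%:R : R)^-1 by rewrite invr_gt0 ltr0Sn.
  have [r [s Ss ->] lt_sd] := inf_adherent n_gt0 E_inf.
  by exists s.
have u_cauchy : forall e : R, 0 < e -> exists N : nat, forall m n : nat,
    (N <= m)%N -> (N <= n)%N -> hnorm ip (u m - u n) < e.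
  move=> e e0; have e4 : 0 < e ^+ 2 / 4 by rewrite divr_gt0 ?exprn_gt0.
  have [N hN] := inv_succ_small e4.
  exists N => m n Nm Nn; rewrite hnorm_lt //.
  have := sqnorm_sub_le_dist dS (hu m).1 (hu n).1.
  have := (hu m).2; have := (hu n).2; have := hN _ Nm; have := hN _ Nn.
  move: (m.+1%:R^-1 : R) (n.+1%:R^-1 : R) => a b; lra.
have [l ul] := cauchy_seq_cvg u_cauchy.
have Sl : S l.
  apply: (closed_subspace_lim hS) => e e0; have [N hN] := ul e e0.
  by exists (u N); split; [exact: (hu N).1 | rewrite -hnormN opprB hN].
exists l => // s Ss; apply: le_trans (dS _ Ss).
apply: sqnorm_le_of_approx => // e e0.
have [N1 hN1] := ul e e0; have [N2 hN2] := inv_succ_small e0.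
exists (x - u (maxn N1 N2)); split.
  by apply: lt_le_trans (hu _).2 _; rewrite lerD2l ltW // hN2 ?leq_maxr.
by rewrite opprB addrC addrA subrK hN1 ?leq_maxl.
Qed.

Lemma exists_orth_proj x : exists2 p, S p & forall s, S s -> ip (x - p) s = 0.
Proof.
have [l Sl lmin] := exists_nearest x; exists l => // s Ss.
apply: ip_eq0_of_sqnorm_min => c; rewrite -addrA -opprD.
by apply: lmin; exact (closed_subspaceD hS Sl (closed_subspaceZ hS c Ss)).
Qed.

Definition orth_proj x : V := s2val (cid2 (exists_orth_proj x)).

Lemma orth_proj_in x : S (orth_proj x).
Proof. exact: s2valP. Qed.
Lemma orth_proj_orth x {s} : S s -> ip (x - orth_proj x) s = 0.
Proof. by rewrite /orth_proj; case: cid2 => /= p _; apply. Qed.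
Lemma orth_projE x {s} : S s -> ip (orth_proj x) s = ip x s.
Proof. by move=> Ss; apply/esym/subr0_eq; rewrite -ipBl orth_proj_orth. Qed.

Lemma orth_proj_id s : S s -> orth_proj s = s.
Proof.
move=> Ss; apply/esym/subr0_eq/ipxx_eq0/orth_proj_orth.
exact (closed_subspaceB hS Ss (orth_proj_in _)).
Qed.

Lemma orth_proj_idem x : orth_proj (orth_proj x) = orth_proj x.
Proof. exact/orth_proj_id/orth_proj_in. Qed.

Lemma orth_proj_ip x y : ip (orth_proj x) y = ip x (orth_proj y).
Proof.
rewrite -(orth_projE x (orth_proj_in y)); apply/subr0_eq.
by rewrite -ipBr ipC orth_proj_orth ?conjc0 //; exact: orth_proj_in.
Qed.

Lemma orth_proj_linear : linear_op orth_proj.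
Proof.
move=> a x y; apply/subr0_eq/ipxx_eq0.
set w := _ - _; have Sw : S w.
  by apply/(closed_subspaceB hS (orth_proj_in _))/(closed_subspaceL hS); exact: orth_proj_in.
by rewrite {1}/w ipBl ipL !orth_projE ?ipL ?subrr.
Qed.

Lemma sqnorm_orth_proj_le x : sqnorm (orth_proj x) <= sqnorm x.
Proof.
have perp : ip (orth_proj x) (x - orth_proj x) = 0.
  by rewrite ipC orth_proj_orth ?conjc0 //; exact: orth_proj_in.
rewrite -{2}(subrK (orth_proj x) x) addrC sqnormD perp /= mulr0 addr0 lerDl.
exact: sqnorm_ge0.
Qed.

Lemma orth_proj_selfadj : selfadj ip orth_proj.
Proof.
split; last exact: orth_proj_ip.
split; first exact: orth_proj_linear.
by exists 1 => x; rewrite mul1r !hnormE ler_sqrt ?sqnorm_ge0 ?sqnorm_orth_proj_le.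
Qed.

Lemma orth_proj_comm {T} : selfadj ip T -> (forall x, S x -> S (T x)) ->
  forall x, T (orth_proj x) = orth_proj (T x).
Proof.
move=> hT TS x; have lT := selfadj_linear hT.
have perp : orth_proj (T (x - orth_proj x)) = 0.
  apply/ipxx_eq0; rewrite orth_projE; last exact: orth_proj_in.
  by rewrite (selfadjE hT) orth_proj_orth //; apply/TS/orth_proj_in.
rewrite -{2}(subrK (orth_proj x) x) (linD lT) (linD orth_proj_linear) perp add0r.
by rewrite [RHS]orth_proj_id //; apply/TS/orth_proj_in.
Qed.

Lemma selfadj_comp_orth_proj {Y} : selfadj ip Y -> (forall x, S (Y x)) ->
  forall x, Y (orth_proj x) = Y x.
Proof.
move=> hY SY x; apply: ip_injl => w.
by rewrite !(selfadjE hY) (orth_projE x (SY w)).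
Qed.

End Projection.

Lemma in_closure_range_self C z : in_closure_range ip C (C z).
Proof. by move=> e e0; exists z; rewrite subrr hnorm0. Qed.

Lemma exists_range_proj {C} : linear_op C -> exists P, is_range_proj ip C P.
Proof.
move=> lC; have hS := closed_subspace_closure_range lC.
exists (orth_proj hS); split.
- exact: orth_proj_selfadj.
- exact: orth_proj_idem.
- move=> y; split => [[x ->]|Cy]; first exact: orth_proj_in.
  by exists y; rewrite orth_proj_id.
Qed.

Lemma range_proj_fix {C P y} :
  is_range_proj ip C P -> in_closure_range ip C y -> P y = y.
Proof. by case=> _ PP rP /rP [x ->]; rewrite PP. Qed.

Lemma range_projK {C P} : selfadj ip C -> is_range_proj ip C P ->
  forall x, C (P x) = C x.
Proof.
move=> hC rpP x; have [saP PP _] := rpP.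
apply/subr0_eq; rewrite -(linB (selfadj_linear hC)); apply: ipl_eq0 => w.
rewrite (selfadjE hC) -(range_proj_fix rpP (in_closure_range_self C w)).
by rewrite -(selfadjE saP) (linB (selfadj_linear saP)) PP subrr ip0l.
Qed.

Lemma logle_compr {C T} : selfadj ip C -> logle ip C T ->
  forall z, T (C z) = C (C z).
Proof.
move=> hC [D [hD TCD CD]] z.
by rewrite TCD (selfadj_comp_eq0C hC hD CD) addr0.
Qed.

Lemma logle_compl {C T} : selfadj ip C -> logle ip C T ->
  forall x, C (T x) = C (C x).
Proof.
by move=> hC [D [hD TCD CD]] x; rewrite TCD (linD (selfadj_linear hC)) CD addr0.
Qed.

Lemma logle_comp_proj {T Q} : selfadj ip T -> selfadj ip Q ->
  (forall x, Q (Q x) = Q x) -> (forall x, T (Q x) = Q (T x)) ->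
  logle ip (fun x => T (Q x)) T.
Proof.
move=> hT hQ QQ TQ; exists (fun x => T x - T (Q x)); split.
- exact: selfadj_sub hT (selfadj_comp hT hQ TQ).
- by move=> x; rewrite addrC subrK.
- move=> x; rewrite (linB (selfadj_linear hQ)) -TQ -(TQ (Q x)) QQ subrr.
  exact: lin0 (selfadj_linear hT).
Qed.

Lemma logle_range_proj {C T P} : selfadj ip C -> logle ip C T ->
  is_range_proj ip C P -> forall x, T (P x) = C x.
Proof.
move=> hC CT rpP x; have [D [hD TCD CD]] := CT.
have DP : D (P x) = 0.
  apply: (closure_range_sub (closed_subspace_kernel (selfadj_bounded hD))).
    exact: selfadj_comp_eq0C hC hD CD.
  by case: rpP => _ _ rP; apply/rP; exists x.
by rewrite TCD DP addr0 (range_projK hC rpP).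
Qed.

Lemma logle_proj_le {C T P Q} : selfadj ip C -> logle ip C T ->
  is_range_proj ip C P -> is_range_proj ip T Q -> proj_le P Q.
Proof.
move=> hC CT rpP rpQ x; have [saP _ rP] := rpP; have [saQ _ _] := rpQ.
have QP y : Q (P y) = P y.
  apply: (range_proj_fix rpQ) => e e0.
  have Py : in_closure_range ip C (P y) by apply/rP; exists y.
  by have [z Pyz] := Py e e0; exists (P z); rewrite (logle_range_proj hC CT rpP).
apply: ip_injl => w.
by rewrite (selfadjE saP) (selfadjE saQ) QP -(selfadjE saP).
Qed.

Section Meet.
Context {A B : V -> V} (hA : selfadj ip A) (hB : selfadj ip B).

Definition agree_space x := forall n, A (iter n A x) - B (iter n A x) = 0.

Lemma closed_agree_space : closed_subspace agree_space.
Proof.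
apply: closed_subspace_bigcap => n; apply: closed_subspace_kernel.
have hAn := bounded_iter n (selfadj_bounded hA).
exact: bounded_sub (bounded_comp (selfadj_bounded hA) hAn) (bounded_comp (selfadj_bounded hB) hAn).
Qed.

Lemma agree_space_eq x : agree_space x -> A x = B x.
Proof. by move=> hx; apply/subr0_eq; exact: hx 0%N. Qed.
Lemma agree_spaceA x : agree_space x -> agree_space (A x).
Proof. by move=> hx n; rewrite -iterSr; exact: hx n.+1. Qed.
Lemma agree_spaceB x : agree_space x -> agree_space (B x).
Proof. by move=> hx; rewrite -agree_space_eq //; exact: agree_spaceA. Qed.

Lemma agree_space_lower {Y} : selfadj ip Y -> logle ip Y A -> logle ip Y B ->
  forall z, agree_space (Y z).
Proof.
move=> hY YA YB z n.
have -> : iter n A (Y z) = Y (iter n Y z).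
  by elim: n => //= n ->; rewrite (logle_compr hY YA).
by rewrite (logle_compr hY YA) (logle_compr hY YB) subrr.
Qed.

Local Notation hK := closed_agree_space.
Local Notation P := (orth_proj hK).

Definition meet x := A (P x).

Lemma meetE x : meet x = B (P x).
Proof. exact/agree_space_eq/(orth_proj_in hK). Qed.

Lemma meet_selfadj : selfadj ip meet.
Proof. exact/(selfadj_comp hA (orth_proj_selfadj hK))/(orth_proj_comm hK)/agree_spaceA. Qed.

Lemma meet_leA : logle ip meet A.
Proof.
apply: (logle_comp_proj hA (orth_proj_selfadj hK) (orth_proj_idem hK)).
exact/(orth_proj_comm hK)/agree_spaceA.
Qed.

Lemma meet_leB : logle ip meet B.
Proof.
rewrite (funext meetE).
apply: (logle_comp_proj hB (orth_proj_selfadj hK) (orth_proj_idem hK)).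
exact/(orth_proj_comm hK)/agree_spaceB.
Qed.

Lemma meet_greatest Y : selfadj ip Y -> logle ip Y A -> logle ip Y B ->
  logle ip Y meet.
Proof.
move=> hY YA YB; exists (fun x => meet x - Y x); split.
- exact: selfadj_sub meet_selfadj hY.
- by move=> x; rewrite addrC subrK.
- move=> x; rewrite (linB (selfadj_linear hY)) /meet (orth_proj_comm hK hA agree_spaceA).
  rewrite (selfadj_comp_orth_proj hK hY (agree_space_lower hY YA YB)).
  by rewrite (logle_compl hY YA) subrr.
Qed.

Lemma exists_logmeet : exists X, is_logmeet ip A B X.
Proof.
exists meet; split; [exact: meet_selfadj | exact: meet_leA | exact: meet_leB |].
exact: meet_greatest.
Qed.

End Meet.

End Hilbert.

Theorem corollary4 (R : realType) (V : lmodType R[i]) (ip : V -> V -> R[i])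
  (hH : is_hilbert ip) (A B : V -> V) (hA : selfadj ip A) (hB : selfadj ip B) :
  exists M : V -> V,
    (exists C0 : V -> V, [/\ selfadj ip C0, logle ip C0 A, logle ip C0 B
                           & is_range_proj ip C0 M]) /\
    (forall C P : V -> V, selfadj ip C -> logle ip C A -> logle ip C B ->
       is_range_proj ip C P -> proj_le P M) /\
    is_logmeet ip A B (fun x => B (M x)).
Proof.
have [X mX] := exists_logmeet hH hA hB; have [saX XA XB Xmax] := mX.
have [M rpM] := exists_range_proj hH (selfadj_linear saX).
have BM : (fun x => B (M x)) = X.
  exact: funext (logle_range_proj hH saX XB rpM).
exists M; split; first by exists X; split.
split; last by rewrite BM.
move=> C P hC CA CB rpP.
exact (logle_proj_le hH hC (Xmax C hC CA CB) rpP rpM).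
Qed.
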